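(* Let $\ell>0$ and let $\xi:(\tau_{\min},\tau_{\max})\to\mathbb{R}^4$ be a worldline whose image is contained in a two-dimensional timelike plane $P$ of Minkowski spacetime. Then for every $\tau_0\in(\tau_{\min},\tau_{\max})$, in an inertial coordinate system (obtained from the original by an orthochronous Lorentz transformation) in which $\dot\xi^a(\tau_0)=\delta^a_0$, and for every $\sigma\in\{1,2,3\}$, the integral $$\int_0^\infty \frac{\big(\tanh\psi(\zeta,\xi(\tau_0))\,\mu^\sigma(\zeta,\xi(\tau_0))-\tanh\chi(\zeta,\xi(\tau_0))\,\nu^\sigma(\zeta,\xi(\tau_0))\big)\,J_2(\zeta/\ell)}{\Delta(\zeta,\xi(\tau_0))\,\zeta}\,d\zeta$$ is absolutely convergent.
   Context: Minkowski spacetime is $\mathbb{R}^4$ with inertial coordinates $(x^0,\dots,x^3)$ and metric $\eta_{ab}=\mathrm{diag}(-1,1,1,1)$ ($c=1$); spatial indices $\rho,\sigma,\kappa\in\{1,2,3\}$ are raised/lowered with $\delta_{\rho\sigma}$. $J_2$ is the Bessel function of the first kind of order 2. A worldline is an inextendible, future-oriented, timelike $C^\infty$ curve $\xi(\tau)$, $\tau\in(\tau_{\min},\tau_{\max})$ ($\tau_{\min}\in\mathbb{R}\cup\{-\infty\}$, $\tau_{\max}\in\mathbb{R}\cup\{+\infty\}$), parametrized by proper time: $\eta_{ab}\dot\xi^a\dot\xi^b=-1$. For events with $y$ in the chronological past of $x$ (i.e. $x-y$ timelike, future-pointing), $D(x-y)=\sqrt{-\eta_{ab}(x^a-y^a)(x^b-y^b)}$.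 For $x=\xi(\tau_0)$ and $\zeta\in(0,\infty)$, $\varpi(\zeta,x)$ is the unique $\tau\in(\tau_{\min},\tau_0)$ with $D(x-\xi(\tau))=\zeta$ (the map $\tau\mapsto D(x-\xi(\tau))$ is a strictly decreasing bijection from $(\tau_{\min},\tau_0)$ onto $(0,\infty)$). Define functions $\chi,\psi$ and spatial unit vectors $\nu,\mu$ (Euclidean norm 1) by $\dot\xi^a(\varpi(\zeta,x))=\cosh\chi(\zeta,x)\,\delta^a_0+\sinh\chi(\zeta,x)\,\nu^\rho(\zeta,x)\,\delta^a_\rho$ and $x^a-\xi^a(\varpi(\zeta,x))=\zeta\big(\cosh\psi(\zeta,x)\,\delta^a_0+\sinh\psi(\zeta,x)\,\mu^\rho(\zeta,x)\,\delta^a_\rho\big)$, and set $\Delta(\zeta,x)=1-\tanh\psi(\zeta,x)\tanh\chi(\zeta,x)\,\mu^\kappa(\zeta,x)\nu_\kappa(\zeta,x)$. *)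

From Stdlib Require Import Reals Lra ClassicalEpsilon Factorial.
From Coquelicot Require Import Coquelicot.
Open Scope R_scope.

(** Vectors of R^4: functions nat -> R, of which only the components
    0,1,2,3 are ever used (0 = time, 1..3 = space). *)
Definition V4 := nat -> R.

Definition mink (u v : V4) : R :=
  - u 0%nat * v 0%nat + u 1%nat * v 1%nat + u 2%nat * v 2%nat + u 3%nat * v 3%nat.

Definition sdot (u v : V4) : R :=
  u 1%nat * v 1%nat + u 2%nat * v 2%nat + u 3%nat * v 3%nat.

Definition Dist (y : V4) : R := sqrt (- mink y y).

Definition vsub (x y : V4) : V4 := fun a => x a - y a.

Definition vel (xi : R -> V4) (tau : R) : V4 :=
  fun a => Derive (fun t => xi t a) tau.

Definition in_interval (tmin tmax : Rbar) (t : R) : Prop :=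
  Rbar_lt tmin (Finite t) /\ Rbar_lt (Finite t) tmax.

Definition worldline (xi : R -> V4) (tmin tmax : Rbar) : Prop :=
  tmin <> p_infty /\ tmax <> m_infty /\ Rbar_lt tmin tmax /\
  (forall (a n : nat) (t : R), (a < 4)%nat -> in_interval tmin tmax t ->
      ex_derive_n (fun s => xi s a) n t) /\
  (forall t, in_interval tmin tmax t -> mink (vel xi t) (vel xi t) = -1) /\
  (forall t, in_interval tmin tmax t -> 0 < vel xi t 0%nat) /\
  (* inextendible: no endpoint limit exists at a finite endpoint *)
  (forall m : R, tmin = Finite m ->
      ~ exists p : V4, forall a, (a < 4)%nat ->
          filterlim (fun s => xi s a) (at_right m) (locally (p a))) /\
  (forall M : R, tmax = Finite M ->
      ~ exists p : V4, forall a, (a < 4)%nat ->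
          filterlim (fun s => xi s a) (at_left M) (locally (p a))).

(** The image of xi (on its interval) lies in a two-dimensional timelike
    (affine) plane P = p + span(u, v), with u, v linearly independent and
    span(u, v) containing a timelike vector. *)
Definition in_timelike_plane (xi : R -> V4) (tmin tmax : Rbar) : Prop :=
  exists p u v : V4,
    (forall s t : R, (forall a, (a < 4)%nat -> s * u a + t * v a = 0) ->
        s = 0 /\ t = 0) /\
    (exists s t : R, mink (fun a => s * u a + t * v a)
                          (fun a => s * u a + t * v a) < 0) /\
    (forall tau, in_interval tmin tmax tau ->
       exists s t : R, forall a, (a < 4)%nat -> xi tau a = p a + s * u a + t * v a).

Definition lapply (L : nat -> nat -> R) (x : V4) : V4 :=
  fun a => L a 0%nat * x 0%nat + L a 1%nat * x 1%nat + L a 2%nat * x 2%nat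
           + L a 3%nat * x 3%nat.

Definition orthochronous_lorentz (L : nat -> nat -> R) : Prop :=
  (forall x y : V4, mink (lapply L x) (lapply L y) = mink x y) /\
  0 < L 0%nat 0%nat.

(** varpi(zeta, xi(tau0)): the unique tau in (tmin, tau0) with
    D(xi(tau0) - xi(tau)) = zeta (chosen by Hilbert's epsilon; uniqueness
    and existence follow from the worldline hypotheses). *)
Definition varpi (xi : R -> V4) (tmin : Rbar) (tau0 zeta : R) : R :=
  epsilon (inhabits 0)
    (fun tau => Rbar_lt tmin (Finite tau) /\ tau < tau0 /\
                Dist (vsub (xi tau0) (xi tau)) = zeta).

Definition acosh (y : R) : R := ln (y + sqrt (y * y - 1)).

(** Unit spatial vector e_1, used as the (irrelevant) value of nu / mu when
    the corresponding rapidity vanishes. *)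
Definition e1 : V4 := fun a => if Nat.eqb a 1 then 1 else 0.

(** chi, nu from  xi-dot(varpi) = cosh chi e_0 + sinh chi nu  (chi >= 0). *)
Definition chi_ (xi : R -> V4) tmin tau0 zeta : R :=
  acosh (vel xi (varpi xi tmin tau0 zeta) 0%nat).

Definition nu_ (xi : R -> V4) tmin tau0 zeta : V4 :=
  let c := chi_ xi tmin tau0 zeta in
  if Req_EM_T (sinh c) 0 then e1
  else fun a => vel xi (varpi xi tmin tau0 zeta) a / sinh c.

(** psi, mu from  x - xi(varpi) = zeta (cosh psi e_0 + sinh psi mu)
    (psi >= 0), where x = xi(tau0). *)
Definition psi_ (xi : R -> V4) tmin tau0 zeta : R :=
  acosh (vsub (xi tau0) (xi (varpi xi tmin tau0 zeta)) 0%nat / zeta).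

Definition mu_ (xi : R -> V4) tmin tau0 zeta : V4 :=
  let p := psi_ xi tmin tau0 zeta in
  if Req_EM_T (sinh p) 0 then e1
  else fun a => vsub (xi tau0) (xi (varpi xi tmin tau0 zeta)) a / (zeta * sinh p).

Definition Delta_ (xi : R -> V4) tmin tau0 zeta : R :=
  1 - tanh (psi_ xi tmin tau0 zeta) * tanh (chi_ xi tmin tau0 zeta)
      * sdot (mu_ xi tmin tau0 zeta) (nu_ xi tmin tau0 zeta).

Definition J2 (x : R) : R :=
  Series (fun k : nat => (-1) ^ k / (INR (fact k) * INR (fact (k + 2)))
                         * (x / 2) ^ (2 * k + 2)).

Definition integrand (l : R) (xi : R -> V4) tmin tau0 (sigma : nat) (zeta : R) : R :=
  (tanh (psi_ xi tmin tau0 zeta) * mu_ xi tmin tau0 zeta sigma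
   - tanh (chi_ xi tmin tau0 zeta) * nu_ xi tmin tau0 zeta sigma)
  * J2 (zeta / l) / (Delta_ xi tmin tau0 zeta * zeta).

Definition abs_conv_0_infty (f : R -> R) : Prop :=
  ex_RInt_gen (fun z => Rabs (f z)) (at_right 0) (Rbar_locally p_infty).

(* After the Lorentz transformation the worldline is at rest at [tau0], and since it lies in a
   timelike plane through its own time axis, it moves spatially along a fixed unit vector [n].
   Then [mu] and [nu] are both [+-n], and the integrand collapses to
   [n^sigma * g * J2 (zeta / l) / zeta], where [g] is the relativistic difference of the velocity
   [X / T] of the separation and the velocity of the worldline at [varpi zeta], so [|g| <= 1].
   Absolute convergence thus reduces to that of [int_0^oo |J2 (z / l)| / z dz], which holds because
   [J2 x = O(x^2)] at [0] and [J2 x = O(x^(-1/2))] at infinity, the latter by a Lyapunov function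
   for Bessel's equation. [varpi] is well defined and continuous because the squared interval to
   [xi tau0] decreases strictly along the past worldline and, by inextendibility, is unbounded. *)

From Stdlib Require Import Reals Lra Lia Psatz Factorial Classical ClassicalEpsilon.
From Coquelicot Require Import Coquelicot.
Open Scope R_scope.

Definition J2_coef (k : nat) : R := (-1) ^ k / (INR (fact k) * INR (fact (k + 2))).

Definition J2_pser : R -> R := PSeries J2_coef.
Definition J2_pser' : R -> R := PSeries (PS_derive J2_coef).
Definition J2_pser'' : R -> R := PSeries (PS_derive (PS_derive J2_coef)).

Lemma INR_fact_pos n : 0 < INR (fact n).
Proof. apply lt_0_INR, lt_O_fact. Qed.

Lemma CV_radius_J2_coef : CV_radius J2_coef = p_infty.
Proof.
  apply CV_radius_infinite_DAlembert.
  - intro n; unfold J2_coef.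
    pose proof (INR_fact_pos n); pose proof (INR_fact_pos (n + 2)).
    apply Rmult_integral_contrapositive; split.
    + apply pow_nonzero; lra.
    + apply Rinv_neq_0_compat, Rmult_integral_contrapositive; split; lra.
  - apply is_lim_seq_ext with (fun n => / (INR (S n) * INR (S (n + 2)))).
    + intro n. unfold J2_coef. replace (S n + 2)%nat with (S (n + 2)) by lia.
      rewrite !fact_simpl, !mult_INR. simpl pow.
      pose proof (INR_fact_pos n); pose proof (INR_fact_pos (n + 2)).
      assert (0 < INR (S n)) by (apply lt_0_INR; lia).
      assert (0 < INR (S (n + 2))) by (apply lt_0_INR; lia).
      assert ((-1) ^ n <> 0) by (apply pow_nonzero; lra).
      replace (-1 * (-1) ^ n / (INR (S n) * INR (fact n) * (INR (S (n + 2)) * INR (fact (n + 2))))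
               / ((-1) ^ n / (INR (fact n) * INR (fact (n + 2)))))
        with (- / (INR (S n) * INR (S (n + 2)))) by (field; repeat split; lra).
      rewrite Rabs_Ropp, Rabs_pos_eq; [reflexivity|].
      left; apply Rinv_0_lt_compat, Rmult_lt_0_compat; lra.
    + change (is_lim_seq (fun n => / (INR (S n) * INR (S (n + 2)))) (Rbar_inv p_infty)).
      apply is_lim_seq_inv; [| discriminate].
      apply is_lim_seq_le_p_loc with INR; [| apply is_lim_seq_INR].
      exists 0%nat; intros n _. rewrite !S_INR, plus_INR.
      pose proof (pos_INR n). simpl. nra.
Qed.

Lemma J2_coef_in_radius x : Rbar_lt (Rabs x) (CV_radius J2_coef).
Proof. now rewrite CV_radius_J2_coef. Qed.

Lemma J2_coef'_in_radius x : Rbar_lt (Rabs x) (CV_radius (PS_derive J2_coef)).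
Proof. now rewrite CV_radius_derive, CV_radius_J2_coef. Qed.

Lemma J2_coef''_in_radius x : Rbar_lt (Rabs x) (CV_radius (PS_derive (PS_derive J2_coef))).
Proof. now rewrite !CV_radius_derive, CV_radius_J2_coef. Qed.

Lemma is_derive_J2_pser z : is_derive J2_pser z (J2_pser' z).
Proof. apply is_derive_PSeries, J2_coef_in_radius. Qed.

Lemma is_derive_J2_pser' z : is_derive J2_pser' z (J2_pser'' z).
Proof. apply is_derive_PSeries, J2_coef'_in_radius. Qed.

Lemma J2_pser_ode z : z * J2_pser'' z + 3 * J2_pser' z + J2_pser z = 0.
Proof.
  unfold J2_pser, J2_pser', J2_pser''.
  rewrite <- PSeries_incr_1.
  rewrite <- (PSeries_scal 3 (PS_derive J2_coef)).
  assert (E1 : ex_pseries (PS_incr_1 (PS_derive (PS_derive J2_coef))) z)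
    by apply ex_pseries_incr_1, CV_radius_inside, J2_coef''_in_radius.
  assert (E2 : ex_pseries (PS_scal 3 (PS_derive J2_coef)) z)
    by (apply ex_pseries_scal; [apply Rmult_comm | apply CV_radius_inside, J2_coef'_in_radius]).
  rewrite <- PSeries_plus by assumption.
  rewrite <- PSeries_plus
    by (try apply ex_pseries_plus; auto; apply CV_radius_inside, J2_coef_in_radius).
  rewrite <- (PSeries_const_0 z).
  apply PSeries_ext; intros [|m].
  - change (0 + 3 * (1 * J2_coef 1) + J2_coef 0 = 0). unfold J2_coef; simpl. field.
  - change (INR (S m) * (INR (S (S m)) * J2_coef (S (S m)))
            + 3 * (INR (S (S m)) * J2_coef (S (S m))) + J2_coef (S m) = 0).
    unfold J2_coef. replace (S (S m) + 2)%nat with (S (S (m + 2))) by lia.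
    replace (S m + 2)%nat with (S (m + 2)) by lia.
    rewrite !fact_simpl, !mult_INR. simpl pow.
    pose proof (INR_fact_pos m); pose proof (INR_fact_pos (m + 2)); pose proof (pos_INR m).
    rewrite !S_INR, plus_INR. simpl INR.
    field. repeat split; lra.
Qed.

Lemma J2_pser_eq x : J2 x = x ^ 2 / 4 * J2_pser (x ^ 2 / 4).
Proof.
  unfold J2, J2_pser, PSeries. rewrite <- Series_scal_l. apply Series_ext; intro k.
  unfold J2_coef. rewrite pow_add, pow_mult.
  replace ((x / 2) ^ 2) with (x ^ 2 / 4) by field. ring.
Qed.

Definition J2' (x : R) : R := x / 2 * J2_pser (x ^ 2 / 4) + x ^ 3 / 8 * J2_pser' (x ^ 2 / 4).

(* [J2_pser''] is eliminated with [J2_pser_ode]. *)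
Definition J2'' (x : R) : R := J2_pser (x ^ 2 / 4) * (1 / 2 - x ^ 2 / 4) - x ^ 2 / 8 * J2_pser' (x ^ 2 / 4).

Lemma is_derive_J2 x : is_derive J2 x (J2' x).
Proof.
  apply is_derive_ext with (fun x => x ^ 2 / 4 * J2_pser (x ^ 2 / 4));
    [intro; symmetry; apply J2_pser_eq|].
  unfold J2'. auto_derive.
  - eexists; apply is_derive_J2_pser.
  - rewrite (is_derive_unique _ _ _ (is_derive_J2_pser _)).
    replace (x * (x * 1) * / 4) with (x ^ 2 / 4) by (simpl; field). field.
Qed.

Lemma is_derive_J2' x : is_derive J2' x (J2'' x).
Proof.
  unfold J2', J2''. auto_derive.
  - split; [eexists; apply is_derive_J2_pser | split; [eexists; apply is_derive_J2_pser' | auto]].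
  - rewrite (is_derive_unique _ _ _ (is_derive_J2_pser _)),
            (is_derive_unique _ _ _ (is_derive_J2_pser' _)).
    replace (x * (x * 1) * / 4) with (x ^ 2 / 4) by (simpl; field).
    pose proof (J2_pser_ode (x ^ 2 / 4)) as E.
    set (z := x ^ 2 / 4) in *.
    assert (Ex : x * x = 4 * z) by (unfold z; simpl; field).
    set (p := J2_pser z) in *; set (q := J2_pser' z) in *; set (r := J2_pser'' z) in *.
    simpl. nra.
Qed.

Lemma J2_bessel_ode x : x <> 0 -> x ^ 2 * J2'' x + x * J2' x + (x ^ 2 - 4) * J2 x = 0.
Proof. intro Hx. rewrite J2_pser_eq. unfold J2'', J2'. field. Qed.

(* With [u = sqrt x * J2 x], Bessel's equation reads [u'' + (1 - 15 / (4 x^2)) u = 0]; this is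
   the energy [u'^2 + (1 - 15 / (4 x^2)) u^2] of that oscillator. *)
Definition J2_energy (x : R) : R :=
  x * (J2' x + J2 x / (2 * x)) ^ 2 + (x - 15 / (4 * x)) * J2 x ^ 2.

Lemma is_derive_J2_energy x : x <> 0 -> is_derive J2_energy x (15 / 2 * J2 x ^ 2 / x ^ 2).
Proof.
  intro Hx. pose proof (J2_bessel_ode x Hx) as B.
  unfold J2_energy. auto_derive.
  - repeat split; auto; eexists; [apply is_derive_J2' | apply is_derive_J2 | apply is_derive_J2].
  - replace (Derive (fun t => J2 t) x) with (J2' x) by (symmetry; apply is_derive_unique, is_derive_J2).
    replace (Derive (fun t => J2' t) x) with (J2'' x) by (symmetry; apply is_derive_unique, is_derive_J2').
    assert (E : J2'' x = - (x * J2' x + (x ^ 2 - 4) * J2 x) / x ^ 2)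
      by (field_simplify_eq; [lra | simpl; nra]).
    rewrite E. generalize (J2 x) (J2' x); intros a b. field. auto.
Qed.

Lemma J2_energy_ge x : 3 <= x -> x / 2 * J2 x ^ 2 <= J2_energy x.
Proof.
  intro Hx. unfold J2_energy.
  assert (0 <= x * (J2' x + J2 x / (2 * x)) ^ 2) by (apply Rmult_le_pos; [lra | apply pow2_ge_0]).
  assert (15 / (4 * x) <= x / 2)
    by (apply Rmult_le_reg_r with (4 * x); [lra|]; field_simplify; nra).
  pose proof (pow2_ge_0 (J2 x)). nra.
Qed.

(* The weight [x^2/(x^2-60)] decays fast enough to absorb the growth [15 J2^2 / (2 x^2)]
   of the energy, thanks to [J2_energy_ge]. *)
Definition J2_damped_energy (x : R) : R := J2_energy x * (x ^ 2 / (x ^ 2 - 60)).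

Lemma is_derive_J2_damped_energy x : 8 <= x ->
  is_derive J2_damped_energy x
    (x ^ 2 / (x ^ 2 - 60) * (15 / 2 * J2 x ^ 2 / x ^ 2)
     + J2_energy x * (-120 * x / (x ^ 2 - 60) ^ 2)).
Proof.
  intro Hx. assert (Hx0 : x <> 0) by lra. assert (Hx6 : x ^ 2 - 60 <> 0) by nra.
  unfold J2_damped_energy. auto_derive.
  - simpl in Hx6. repeat split; auto. eexists; apply is_derive_J2_energy; lra.
  - replace (Derive (fun t => J2_energy t) x) with (15 / 2 * J2 x ^ 2 / x ^ 2)
      by (symmetry; apply is_derive_unique, is_derive_J2_energy, Hx0).
    generalize (J2 x) (J2_energy x); intros a b. field. simpl in Hx6. auto.
Qed.

Lemma J2_damped_energy_le x : 8 <= x -> J2_damped_energy x <= J2_damped_energy 8.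
Proof.
  intro Hx.
  destruct (MVT_gen J2_damped_energy 8 x (fun t => t ^ 2 / (t ^ 2 - 60) * (15 / 2 * J2 t ^ 2 / t ^ 2)
                                                + J2_energy t * (-120 * t / (t ^ 2 - 60) ^ 2)))
    as [c [Hc E]];
    rewrite ?Rmin_left, ?Rmax_right in * by lra.
  - intros t Ht. apply is_derive_J2_damped_energy; lra.
  - intros t Ht. apply continuity_pt_filterlim, (ex_derive_continuous J2_damped_energy).
    eexists; apply is_derive_J2_damped_energy; lra.
  - enough (c ^ 2 / (c ^ 2 - 60) * (15 / 2 * J2 c ^ 2 / c ^ 2)
            + J2_energy c * (-120 * c / (c ^ 2 - 60) ^ 2) <= 0) by nra.
    pose proof (J2_energy_ge c ltac:(lra)) as G.
    set (a := J2 c) in *; set (g := J2_energy c) in *.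
    assert (0 < c ^ 2 - 60) by nra.
    replace (c ^ 2 / (c ^ 2 - 60) * (15 / 2 * a ^ 2 / c ^ 2) + g * (-120 * c / (c ^ 2 - 60) ^ 2))
      with ((15 / 2 * a ^ 2 * (c ^ 2 - 60) - 120 * c * g) / (c ^ 2 - 60) ^ 2) by (field; lra).
    apply Rmult_le_0_r; [pose proof (pow2_ge_0 a); nra | left; apply Rinv_0_lt_compat; nra].
Qed.

Lemma J2_decay : exists K, 0 <= K /\ forall x, 8 <= x -> Rabs (J2 x) <= sqrt (K / x).
Proof.
  exists (2 * J2_damped_energy 8). split.
  - pose proof (J2_energy_ge 8 ltac:(lra)). pose proof (pow2_ge_0 (J2 8)).
    unfold J2_damped_energy. simpl. nra.
  - intros x Hx. rewrite <- sqrt_Rsqr_abs. apply sqrt_le_1_alt.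
    pose proof (J2_damped_energy_le x Hx). pose proof (J2_energy_ge x ltac:(lra)).
    assert (J2_energy x <= J2_damped_energy x).
    { unfold J2_damped_energy. pose proof (pow2_ge_0 (J2 x)).
      assert (0 <= J2_energy x) by nra.
      assert (1 <= x ^ 2 / (x ^ 2 - 60))
        by (apply Rmult_le_reg_r with (x ^ 2 - 60); [nra | field_simplify; nra]).
      nra. }
    unfold Rsqr. apply Rmult_le_reg_r with x; [lra|].
    field_simplify; [| lra]. simpl in *. nra.
Qed.

Lemma continuity_pt_ex_derive f x : ex_derive f x -> continuity_pt f x.
Proof. intro H. apply continuity_pt_filterlim, (ex_derive_continuous f), H. Qed.

Lemma ex_RInt_continuity_pt f a b :
  a <= b -> (forall x, a <= x <= b -> continuity_pt f x) -> ex_RInt f a b.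
Proof.
  intros Hab H. apply (ex_RInt_continuous (V := R_CompleteNormedModule)). intros z Hz.
  rewrite Rmin_left, Rmax_right in Hz by lra.
  apply continuity_pt_filterlim, H, Hz.
Qed.

Lemma RInt_le_RInt_subinterval g u a b v :
  u <= a -> a <= b -> b <= v -> ex_RInt g u v -> (forall x, u <= x <= v -> 0 <= g x) ->
  RInt g a b <= RInt g u v.
Proof.
  intros Hua Hab Hbv Hex Hg.
  assert (Hsub : forall c d, u <= c -> c <= d -> d <= v -> ex_RInt g c d)
    by (intros c d **; apply (ex_RInt_Chasles_2 g u c d); [lra|];
        apply (ex_RInt_Chasles_1 g u d v); auto; lra).
  assert (Hpos : forall c d, u <= c -> c <= d -> d <= v -> 0 <= RInt g c d)
    by (intros; apply RInt_ge_0; auto; intros; apply Hg; lra).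
  rewrite <- (RInt_Chasles g u a v), <- (RInt_Chasles g a b v) by (apply Hsub; lra).
  pose proof (Hpos u a). pose proof (Hpos b v).
  change (RInt g a b <= RInt g u a + (RInt g a b + RInt g b v)). lra.
Qed.

Lemma ball_R x e y : ball x e y <-> Rabs (y - x) < e.
Proof. reflexivity. Qed.

(* The improper integral is the supremum of the integrals over compact subintervals. *)
Lemma ex_RInt_gen_nonneg (g : R -> R) :
  (forall x, 0 < x -> continuity_pt g x) -> (forall x, 0 < x -> 0 <= g x) ->
  (exists M, forall a b, 0 < a -> a <= b -> RInt g a b <= M) ->
  ex_RInt_gen g (at_right 0) (Rbar_locally p_infty).
Proof.
  intros Hc Hp [M HM].
  assert (Hex : forall a b, 0 < a -> a <= b -> ex_RInt g a b)
    by (intros; apply ex_RInt_continuity_pt; auto; intros; apply Hc; lra).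
  set (E := fun r => exists a b, 0 < a <= b /\ r = RInt g a b).
  destruct (completeness E) as [s [Hs1 Hs2]].
  { exists M. intros r [a [b [Hab ->]]]. apply HM; lra. }
  { exists (RInt g 1 1), 1, 1. split; [lra | reflexivity]. }
  exists s. intros P [eps HP].
  assert (Happrox : exists a0 b0, 0 < a0 <= b0 /\ s - eps < RInt g a0 b0).
  { apply NNPP. intro Hn.
    enough (s <= s - eps) by (destruct eps; simpl in *; lra).
    apply Hs2. intros r [a [b [Hab ->]]]. apply Rnot_lt_le. intro. apply Hn. now exists a, b. }
  destruct Happrox as [a0 [b0 [Hab0 Hlt]]].
  apply Filter_prod with (fun a => 0 < a < a0) (fun b => b0 < b).
  - exists (mkposreal a0 (proj1 Hab0)). intros y Hy Hy0. rewrite ball_R in Hy. simpl in Hy.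
    split; [exact Hy0|]. rewrite Rminus_0_r, Rabs_pos_eq in Hy by lra. exact Hy.
  - now exists b0.
  - intros a b Ha Hb. exists (RInt g a b). split.
    + apply (RInt_correct (V := R_CompleteNormedModule)), Hex; lra.
    + apply HP, ball_R.
      assert (RInt g a b <= s) by (apply Hs1; exists a, b; split; [lra | reflexivity]).
      assert (RInt g a0 b0 <= RInt g a b)
        by (apply RInt_le_RInt_subinterval; try lra; [apply Hex | intros; apply Hp]; lra).
      apply Rabs_def1; lra.
Qed.

Lemma continuity_pt_J2 x : continuity_pt J2 x.
Proof. apply continuity_pt_ex_derive. eexists; apply is_derive_J2. Qed.

Definition abs_J2_div (l z : R) : R := Rabs (J2 (z / l)) / z.

Lemma continuity_pt_abs_J2_div l z : 0 < l -> 0 < z -> continuity_pt (abs_J2_div l) z.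
Proof.
  intros Hl Hz. unfold abs_J2_div.
  apply continuity_pt_div; [| apply continuity_pt_id | lra].
  apply (continuity_pt_comp (fun t => J2 (t / l)) Rabs); [| apply Rcontinuity_abs].
  apply continuity_pt_ex_derive.
  apply (ex_derive_comp J2 (fun t => t / l)); [eexists; apply is_derive_J2 | auto_derive; lra].
Qed.

(* Near [0] the integrand extends continuously, since [J2 x = O(x^2)]. *)
Lemma abs_J2_div_eq l z : 0 < l -> 0 < z ->
  abs_J2_div l z = Rabs (z * J2_pser (z ^ 2 / (4 * l ^ 2))) / (4 * l ^ 2).
Proof.
  intros Hl Hz. unfold abs_J2_div. rewrite J2_pser_eq.
  replace ((z / l) ^ 2 / 4) with (z ^ 2 / (4 * l ^ 2)) by (field; lra).
  replace (z ^ 2 / (4 * l ^ 2) * J2_pser (z ^ 2 / (4 * l ^ 2)))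
    with (z * J2_pser (z ^ 2 / (4 * l ^ 2)) * (z / (4 * l ^ 2))) by (field; lra).
  rewrite Rabs_mult, (Rabs_pos_eq (z / (4 * l ^ 2)))
    by (apply Rmult_le_pos; [lra | left; apply Rinv_0_lt_compat; nra]).
  field. split; lra.
Qed.

Lemma RInt_abs_J2_div_bounded_near_0 l c : 0 < l ->
  exists M, forall a b, 0 < a -> a <= b -> b <= c -> RInt (abs_J2_div l) a b <= M.
Proof.
  intro Hl.
  set (p := fun z => Rabs (z * J2_pser (z ^ 2 / (4 * l ^ 2))) / (4 * l ^ 2)).
  assert (Hp : forall z, continuity_pt p z).
  { intro z. unfold p. apply continuity_pt_div; [| apply continuity_pt_const; now intros ? ? | nra].
    apply (continuity_pt_comp (fun t => t * J2_pser (t ^ 2 / (4 * l ^ 2))) Rabs);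
      [| apply Rcontinuity_abs].
    apply continuity_pt_ex_derive. auto_derive. eexists; apply is_derive_J2_pser. }
  exists (RInt p 0 (Rmax 0 c)). intros a b Ha Hab Hbc.
  rewrite (RInt_ext (abs_J2_div l) p)
    by (intros x Hx; rewrite Rmin_left in Hx by lra; apply abs_J2_div_eq; lra).
  apply RInt_le_RInt_subinterval; try lra.
  - pose proof (Rmax_r 0 c). lra.
  - apply ex_RInt_continuity_pt; [apply Rmax_l | auto].
  - intros. unfold p. apply Rmult_le_pos; [apply Rabs_pos | left; apply Rinv_0_lt_compat; nra].
Qed.

(* For [z >= 8 l] the integrand is dominated by [C z^(-3/2)], with primitive [-2 C / sqrt z]. *)
Lemma RInt_abs_J2_div_bounded_near_infty l : 0 < l ->
  exists M, forall a b, 8 * l <= a -> a <= b -> RInt (abs_J2_div l) a b <= M.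
Proof.
  intro Hl. destruct J2_decay as [K [HK Hdecay]].
  set (C := sqrt (K * l)). assert (HC : 0 <= C) by apply sqrt_pos.
  set (c := 8 * l). assert (Hc : 0 < c) by (unfold c; lra).
  exists (2 * C / sqrt c). intros a b Ha Hab.
  set (q := fun z => C / (z * sqrt z)).
  assert (IQ : is_RInt q a b (- 2 * C / sqrt b - - 2 * C / sqrt a)).
  { apply (is_RInt_derive (V := R_CompleteNormedModule) (fun z => - 2 * C / sqrt z) q);
      intros x Hx; rewrite Rmin_left, Rmax_right in Hx by lra;
      (assert (0 < x) by lra); assert (0 < sqrt x) by (apply sqrt_lt_R0; lra).
    - unfold q. auto_derive; [repeat split; lra|].
      pose proof (sqrt_sqrt x ltac:(lra)) as Hsq.
      replace (x * sqrt x) with (sqrt x * sqrt x * sqrt x) by (rewrite Hsq; ring).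
      field. lra.
    - apply (ex_derive_continuous q). unfold q. auto_derive. split; [lra | nra]. }
  assert (Hle : RInt (abs_J2_div l) a b <= RInt q a b).
  { apply RInt_le; auto.
    - apply ex_RInt_continuity_pt; auto. intros. apply continuity_pt_abs_J2_div; lra.
    - eexists; exact IQ.
    - intros x Hx. unfold abs_J2_div, q.
      assert (0 < x) by lra. assert (0 < sqrt x) by (apply sqrt_lt_R0; lra).
      assert (HJ : Rabs (J2 (x / l)) <= C / sqrt x).
      { eapply Rle_trans; [apply Hdecay; apply Rmult_le_reg_r with l; [lra|];
                           unfold c in Ha; field_simplify; lra |].
        unfold C. rewrite <- sqrt_div_alt by lra. right. f_equal. field. split; lra. }
      replace (C / (x * sqrt x)) with (C / sqrt x / x) by (field; split; lra).
      apply Rmult_le_compat_r; [left; apply Rinv_0_lt_compat; lra | exact HJ]. }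
  rewrite (is_RInt_unique _ _ _ _ IQ) in Hle.
  assert (0 < sqrt c) by (apply sqrt_lt_R0; lra).
  assert (sqrt c <= sqrt a) by (apply sqrt_le_1_alt; lra).
  assert (0 < sqrt b) by (apply sqrt_lt_R0; lra).
  assert (2 * C / sqrt a <= 2 * C / sqrt c)
    by (apply Rmult_le_compat_l; [lra | apply Rinv_le_contravar; lra]).
  assert (0 <= 2 * C / sqrt b) by (apply Rmult_le_pos; [lra | left; apply Rinv_0_lt_compat; lra]).
  replace (- 2 * C / sqrt b - - 2 * C / sqrt a) with (2 * C / sqrt a - 2 * C / sqrt b) in Hle
    by (field; lra).
  lra.
Qed.

Lemma RInt_abs_J2_div_bounded l : 0 < l ->
  exists M, forall a b, 0 < a -> a <= b -> RInt (abs_J2_div l) a b <= M.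
Proof.
  intro Hl. set (c := 8 * l).
  destruct (RInt_abs_J2_div_bounded_near_0 l c Hl) as [M0 H0].
  destruct (RInt_abs_J2_div_bounded_near_infty l Hl) as [M1 H1]. fold c in H1.
  assert (Hex : forall a b, 0 < a -> a <= b -> ex_RInt (abs_J2_div l) a b)
    by (intros; apply ex_RInt_continuity_pt; auto; intros; apply continuity_pt_abs_J2_div; lra).
  assert (HM0 : 0 <= M0).
  { eapply Rle_trans; [| apply (H0 (c / 2) (c / 2)); unfold c; lra]. rewrite RInt_point. right; reflexivity. }
  assert (HM1 : 0 <= M1).
  { eapply Rle_trans; [| apply (H1 c c); lra]. rewrite RInt_point. right; reflexivity. }
  exists (M0 + M1). intros a b Ha Hab.
  destruct (Rle_dec b c) as [Hb | Hb]; [specialize (H0 a b Ha Hab Hb); lra|].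
  destruct (Rle_dec c a) as [Ha' | Ha']; [specialize (H1 a b Ha' Hab); lra|].
  rewrite <- (RInt_Chasles (abs_J2_div l) a c b) by (apply Hex; lra).
  specialize (H0 a c Ha ltac:(lra) (Rle_refl _)). specialize (H1 c b (Rle_refl _) ltac:(lra)).
  change (RInt (abs_J2_div l) a c + RInt (abs_J2_div l) c b <= M0 + M1). lra.
Qed.

Lemma in_interval_between tmin tmax a b t :
  in_interval tmin tmax a -> in_interval tmin tmax b -> a <= t <= b -> in_interval tmin tmax t.
Proof. unfold in_interval. destruct tmin, tmax; simpl; intros; lra. Qed.

Lemma in_interval_below tmin tmax (t tau0 : R) :
  in_interval tmin tmax tau0 -> Rbar_lt tmin t -> t < tau0 -> in_interval tmin tmax t.
Proof. intros [H1 H2] H3 H4. split; auto. destruct tmax; simpl in *; lra || auto. Qed.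

Lemma in_interval_earlier tmin tmax tau0 :
  in_interval tmin tmax tau0 -> exists t, in_interval tmin tmax t /\ t < tau0.
Proof.
  intros Hin. pose proof Hin as [H1 _].
  destruct tmin as [m | |]; simpl in H1; try contradiction.
  - exists ((m + tau0) / 2). split; [apply in_interval_below with tau0; simpl |]; auto; lra.
  - exists (tau0 - 1). split; [apply in_interval_below with tau0; simpl |]; auto; lra.
Qed.

Lemma locally_in_interval tmin tmax t : in_interval tmin tmax t -> locally t (in_interval tmin tmax).
Proof.
  intros [H1 H2].
  assert (Hd : exists d, 0 < d /\ forall s, Rabs (s - t) < d -> in_interval tmin tmax s).
  { unfold in_interval. destruct tmin as [m | |], tmax as [M | |]; simpl in *; try contradiction.
    - exists (Rmin (t - m) (M - t)). split; [apply Rmin_pos; lra|].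
      intros s Hs. apply Rabs_def2 in Hs. pose proof (Rmin_l (t - m) (M - t)).
      pose proof (Rmin_r (t - m) (M - t)). lra.
    - exists (t - m). split; [lra|]. intros s Hs. apply Rabs_def2 in Hs. lra.
    - exists (M - t). split; [lra|]. intros s Hs. apply Rabs_def2 in Hs. lra.
    - exists 1. split; [lra | auto]. }
  destruct Hd as [d [Hd H]]. exists (mkposreal d Hd). exact H.
Qed.

Lemma is_derive_neg_decreasing f df t1 t2 :
  t1 < t2 -> (forall x, t1 <= x <= t2 -> is_derive f x (df x)) ->
  (forall x, t1 <= x <= t2 -> df x < 0) -> f t2 < f t1.
Proof.
  intros H12 Hd Hn.
  destruct (MVT_gen f t1 t2 df) as [c [Hc E]]; rewrite ?Rmin_left, ?Rmax_right in * by lra.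
  - intros x Hx. apply Hd; lra.
  - intros x Hx. apply continuity_pt_ex_derive. exists (df x). apply Hd; lra.
  - pose proof (Hn c Hc). nra.
Qed.

Lemma ex_lim_at_right_nonincreasing (f : R -> R) m t1 K : m < t1 ->
  (forall s u, m < s -> s <= u -> u <= t1 -> f u <= f s) ->
  (forall s, m < s <= t1 -> f s <= K) ->
  exists L, filterlim f (at_right m) (locally L).
Proof.
  intros Hm Hmono HK.
  set (E := fun r => exists s, m < s <= t1 /\ r = f s).
  destruct (completeness E) as [L [HL1 HL2]].
  { exists K. intros r [s [Hs ->]]. apply HK; auto. }
  { exists (f t1), t1. split; [lra | reflexivity]. }
  exists L. intros P [eps HP].
  assert (Happrox : exists s0, m < s0 <= t1 /\ L - eps < f s0).
  { apply NNPP. intro Hn.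
    enough (L <= L - eps) by (destruct eps; simpl in *; lra).
    apply HL2. intros r [s [Hs ->]]. apply Rnot_lt_le. intro. apply Hn. now exists s. }
  destruct Happrox as [s0 [Hs0 Hlt]].
  exists (mkposreal _ (proj2 (Rlt_0_minus _ _) (proj1 Hs0))). intros s Hs Hms.
  apply HP, ball_R. rewrite ball_R in Hs. simpl in Hs. apply Rabs_def2 in Hs.
  assert (f s <= L) by (apply HL1; exists s; split; [lra | reflexivity]).
  assert (f s0 <= f s) by (apply Hmono; lra).
  apply Rabs_def1; lra.
Qed.

Lemma filterlim_Rplus {T} (F : (T -> Prop) -> Prop) {FF : Filter F} (u v : T -> R) a b :
  filterlim u F (locally a) -> filterlim v F (locally b) ->
  filterlim (fun t => u t + v t) F (locally (a + b)).
Proof. intros; eapply filterlim_comp_2; eauto; apply (filterlim_plus a b). Qed.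

Lemma filterlim_Rmult_l {T} (F : (T -> Prop) -> Prop) {FF : Filter F} (u : T -> R) a k :
  filterlim u F (locally a) -> filterlim (fun t => k * u t) F (locally (k * a)).
Proof. intros; eapply filterlim_comp; eauto; apply (filterlim_scal_r k a). Qed.

Lemma filterlim_affine2 {T} (F : (T -> Prop) -> Prop) {FF : Filter F} (f g : T -> R) a b c0 c1 c2 :
  filterlim f F (locally a) -> filterlim g F (locally b) ->
  filterlim (fun t => c0 + c1 * f t + c2 * g t) F (locally (c0 + c1 * a + c2 * b)).
Proof.
  intros Hf Hg.
  repeat apply filterlim_Rplus; try apply filterlim_Rmult_l; auto using filterlim_const.
Qed.

Lemma is_derive_component_comb (y : R -> V4) t (f : R -> R) df k0 c0 c1 c2 c3 :
  (forall a, (a < 4)%nat -> ex_derive (fun s => y s a) t) ->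
  (forall s, f s = k0 + c0 * y s 0%nat + c1 * y s 1%nat + c2 * y s 2%nat + c3 * y s 3%nat) ->
  df = c0 * vel y t 0%nat + c1 * vel y t 1%nat + c2 * vel y t 2%nat + c3 * vel y t 3%nat ->
  is_derive f t df.
Proof.
  intros H Hf ->. apply is_derive_ext with (1 := fun s => eq_sym (Hf s)).
  set (f0 := fun s => y s 0%nat); set (f1 := fun s => y s 1%nat).
  set (f2 := fun s => y s 2%nat); set (f3 := fun s => y s 3%nat).
  change (is_derive (fun s => k0 + c0 * f0 s + c1 * f1 s + c2 * f2 s + c3 * f3 s) t
    (c0 * Derive f0 t + c1 * Derive f1 t + c2 * Derive f2 t + c3 * Derive f3 t)).
  auto_derive.
  - repeat split; [apply (H 0%nat) | apply (H 1%nat) | apply (H 2%nat) | apply (H 3%nat)]; lia.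
  - unfold f0, f1, f2, f3. cbv beta. ring.
Qed.

Lemma cosh_sinh_acosh x : 1 <= x -> cosh (acosh x) = x /\ sinh (acosh x) = sqrt (x * x - 1).
Proof.
  intro Hx. set (s := sqrt (x * x - 1)).
  assert (Hs : 0 <= s) by apply sqrt_pos.
  assert (Hss : s * s = x * x - 1) by (apply sqrt_sqrt; nra).
  assert (E1 : exp (acosh x) = x + s) by (unfold acosh; apply exp_ln; lra).
  assert (E2 : exp (- acosh x) = x - s) by (rewrite exp_Ropp, E1; field_simplify_eq; nra).
  unfold cosh, sinh. rewrite E1, E2. split; field.
Qed.

(* The decoded expression is the body of [mu_] (and, for [z = 1], of [nu_]). *)
Lemma tanh_rapidity_direction (D : V4) z s : 0 < z -> 0 < D 0%nat ->
  D 0%nat * D 0%nat - (D 1%nat * D 1%nat + D 2%nat * D 2%nat + D 3%nat * D 3%nat) = z * z ->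
  (1 <= s <= 3)%nat ->
  tanh (acosh (D 0%nat / z))
  * (if Req_EM_T (sinh (acosh (D 0%nat / z))) 0 then e1
     else fun a => D a / (z * sinh (acosh (D 0%nat / z)))) s
  = D s / D 0%nat.
Proof.
  intros Hz HD HS Hs.
  assert (Hy : 1 <= D 0%nat / z)
    by (apply Rmult_le_reg_r with z; auto; field_simplify; [nra | lra]).
  destruct (cosh_sinh_acosh _ Hy) as [Ec Es].
  assert (Hsq : D s * D s <= D 1%nat * D 1%nat + D 2%nat * D 2%nat + D 3%nat * D 3%nat)
    by (destruct s as [| [| [| [|]]]]; try lia; nra).
  unfold tanh. destruct (Req_EM_T _ 0) as [H0 | H0].
  - rewrite H0. rewrite Es in H0. apply sqrt_eq_0 in H0; [| nra].
    replace (D 0%nat / z * (D 0%nat / z)) with (D 0%nat * D 0%nat / (z * z)) in H0 by (field; lra).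
    assert (D 0%nat * D 0%nat = z * z).
    { apply Rmult_eq_reg_r with (/ (z * z)); [| apply Rinv_neq_0_compat; nra].
      rewrite Rinv_r by nra. lra. }
    assert (HDs : D s = 0) by nra. rewrite HDs. field. lra.
  - rewrite Ec. field. repeat split; lra.
Qed.

Lemma tanh_rapidity_direction_unit (D : V4) s : 0 < D 0%nat ->
  D 0%nat * D 0%nat - (D 1%nat * D 1%nat + D 2%nat * D 2%nat + D 3%nat * D 3%nat) = 1 ->
  (1 <= s <= 3)%nat ->
  tanh (acosh (D 0%nat))
  * (if Req_EM_T (sinh (acosh (D 0%nat))) 0 then e1 else fun a => D a / sinh (acosh (D 0%nat))) s
  = D s / D 0%nat.
Proof.
  intros HD HS Hs.
  rewrite <- (tanh_rapidity_direction D 1 s) by (auto; lra). rewrite Rdiv_1_r.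
  destruct (Req_EM_T _ 0); [reflexivity|]. now rewrite Rmult_1_l.
Qed.

(* The situation after the Lorentz transformation: a worldline at rest at [tau0] whose spatial
   motion is along the unit vector [n]. *)
Record planar_motion (y : R -> V4) (tmin tmax : Rbar) (tau0 : R) (n : V4) : Prop := {
  pm_tau0 : in_interval tmin tmax tau0;
  pm_derive : forall t a, (a < 4)%nat -> in_interval tmin tmax t -> ex_derive (fun s => y s a) t;
  pm_vel_cont : forall t a, (a < 4)%nat -> in_interval tmin tmax t ->
    continuity_pt (fun s => vel y s a) t;
  pm_proper_time : forall t, in_interval tmin tmax t -> mink (vel y t) (vel y t) = -1;
  pm_rest : forall a, (a < 4)%nat -> vel y tau0 a = if Nat.eqb a 0 then 1 else 0;
  pm_unit : n 1%nat * n 1%nat + n 2%nat * n 2%nat + n 3%nat * n 3%nat = 1;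
  pm_line : forall t s, in_interval tmin tmax t -> (1 <= s <= 3)%nat ->
    y t s = y tau0 s + sdot (vsub (y t) (y tau0)) n * n s;
  pm_inext : forall m, tmin = Finite m ->
    ~ exists p : V4, forall a, (a < 4)%nat ->
        filterlim (fun s => y s a) (at_right m) (locally (p a))
}.

Arguments pm_tau0 {y tmin tmax tau0 n}.
Arguments pm_derive {y tmin tmax tau0 n}.
Arguments pm_vel_cont {y tmin tmax tau0 n}.
Arguments pm_proper_time {y tmin tmax tau0 n}.
Arguments pm_rest {y tmin tmax tau0 n}.
Arguments pm_unit {y tmin tmax tau0 n}.
Arguments pm_line {y tmin tmax tau0 n}.
Arguments pm_inext {y tmin tmax tau0 n}.

Section PlanarMotion.

Variables (y : R -> V4) (tmin tmax : Rbar) (tau0 : R) (n : V4).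
Hypothesis G : planar_motion y tmin tmax tau0 n.

Definition vtime t := vel y t 0%nat.
Definition vpos t := sdot (vel y t) n.
Definition dtime t := y tau0 0%nat - y t 0%nat.
Definition dpos t := sdot (vsub (y tau0) (y t)) n.

(* Light-cone coordinates of the separation [y tau0 - y t]. *)
Definition dminus t := dtime t - dpos t.
Definition dplus t := dtime t + dpos t.
Definition dsq t := dminus t * dplus t.

Lemma sq_n_sum (w : R) :
  w * n 1%nat * (w * n 1%nat) + w * n 2%nat * (w * n 2%nat) + w * n 3%nat * (w * n 3%nat) = w * w.
Proof.
  replace (w * w) with (w * w * (n 1%nat * n 1%nat + n 2%nat * n 2%nat + n 3%nat * n 3%nat))
    by (rewrite (pm_unit G); ring).
  ring.
Qed.

Lemma vel_spatial t s : in_interval tmin tmax t -> (1 <= s <= 3)%nat -> vel y t s = vpos t * n s.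
Proof.
  intros Ht Hs. unfold vel at 1.
  rewrite (Derive_ext_loc _ (fun u => y tau0 s + sdot (vsub (y u) (y tau0)) n * n s))
    by (generalize (locally_in_interval _ _ _ Ht); apply filter_imp;
        intros u Hu; apply (pm_line G); auto).
  apply is_derive_unique.
  apply (is_derive_component_comb y t _ _ (y tau0 s - sdot (y tau0) n * n s)
           0 (n 1%nat * n s) (n 2%nat * n s) (n 3%nat * n s)).
  - intros; apply (pm_derive G); auto.
  - intro u. unfold sdot, vsub. ring.
  - unfold vpos, sdot. ring.
Qed.

Lemma dpos_spatial t s : in_interval tmin tmax t -> (1 <= s <= 3)%nat ->
  y tau0 s - y t s = dpos t * n s.
Proof.
  intros Ht Hs.
  assert (E : forall k, (1 <= k <= 3)%nat -> y t k = y tau0 k + sdot (vsub (y t) (y tau0)) n * n k)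
    by (intros; apply (pm_line G); auto).
  set (lam := sdot (vsub (y t) (y tau0)) n) in *. clearbody lam.
  unfold dpos, sdot, vsub. rewrite (E s), (E 1%nat), (E 2%nat), (E 3%nat) by lia.
  transitivity (- lam * (n 1%nat * n 1%nat + n 2%nat * n 2%nat + n 3%nat * n 3%nat) * n s);
    [rewrite (pm_unit G) | ]; ring.
Qed.

Lemma vtime_vpos_hyperbola t : in_interval tmin tmax t -> vtime t * vtime t - vpos t * vpos t = 1.
Proof.
  intro Ht. pose proof (pm_proper_time G t Ht) as M. unfold mink in M.
  rewrite (vel_spatial t 1), (vel_spatial t 2), (vel_spatial t 3) in M by (auto; lia).
  pose proof (sq_n_sum (vpos t)). unfold vtime. lra.
Qed.

Lemma vtime_pos t : in_interval tmin tmax t -> t <= tau0 -> 0 < vtime t.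
Proof.
  intros Ht Hle. pose proof (vtime_vpos_hyperbola t Ht).
  destruct (Rlt_or_le 0 (vtime t)) as [Hpos | Hnpos]; auto. exfalso.
  assert (Hneg : vtime t < 0) by nra.
  assert (H0 : vtime tau0 = 1) by (unfold vtime; rewrite (pm_rest G) by lia; reflexivity).
  destruct (Req_dec t tau0) as [-> | Hne]; [lra|].
  destruct (Ranalysis5.IVT_interv vtime t tau0) as [z [Hz Hz0]]; try lra.
  - intros a Ha. apply (pm_vel_cont G); [lia|].
    apply in_interval_between with t tau0; auto. apply (pm_tau0 G).
  - pose proof (vtime_vpos_hyperbola z (in_interval_between _ _ _ _ _ Ht (pm_tau0 G) Hz)).
    rewrite Hz0 in *. nra.
Qed.

Lemma is_derive_dtime t : in_interval tmin tmax t -> is_derive dtime t (- vtime t).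
Proof.
  intro Ht. apply (is_derive_component_comb y t _ _ (y tau0 0%nat) (-1) 0 0 0).
  - intros; apply (pm_derive G); auto.
  - intro u. unfold dtime. ring.
  - unfold vtime. ring.
Qed.

Lemma is_derive_dpos t : in_interval tmin tmax t -> is_derive dpos t (- vpos t).
Proof.
  intro Ht. apply (is_derive_component_comb y t _ _ (sdot (y tau0) n) 0 (- n 1%nat) (- n 2%nat) (- n 3%nat)).
  - intros; apply (pm_derive G); auto.
  - intro u. unfold dpos, sdot, vsub. ring.
  - unfold vpos, sdot. ring.
Qed.

Lemma dminus_dplus_decreasing t1 t2 : in_interval tmin tmax t1 -> t1 < t2 -> t2 <= tau0 ->
  dminus t2 < dminus t1 /\ dplus t2 < dplus t1.
Proof.
  intros H1 H12 H2.
  assert (HI : forall x, t1 <= x <= t2 -> in_interval tmin tmax x)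
    by (intros; apply in_interval_between with t1 tau0; auto; [apply (pm_tau0 G) | lra]).
  assert (HV : forall x, t1 <= x <= t2 -> 0 < vtime x - vpos x /\ 0 < vtime x + vpos x).
  { intros x Hx. pose proof (vtime_vpos_hyperbola x (HI x Hx)).
    pose proof (vtime_pos x (HI x Hx) ltac:(lra)). split; nra. }
  split.
  - apply is_derive_neg_decreasing with (fun t => - vtime t - - vpos t); auto.
    + intros. apply (is_derive_minus dtime dpos); [apply is_derive_dtime | apply is_derive_dpos]; auto.
    + intros x Hx. destruct (HV x Hx). lra.
  - apply is_derive_neg_decreasing with (fun t => - vtime t + - vpos t); auto.
    + intros. apply (is_derive_plus dtime dpos); [apply is_derive_dtime | apply is_derive_dpos]; auto.
    + intros x Hx. destruct (HV x Hx). lra.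
Qed.

Lemma dminus_dplus_tau0 : dminus tau0 = 0 /\ dplus tau0 = 0.
Proof. unfold dminus, dplus, dtime, dpos, sdot, vsub. split; ring. Qed.

Lemma dminus_dplus_pos t : in_interval tmin tmax t -> t < tau0 -> 0 < dminus t /\ 0 < dplus t.
Proof.
  intros Ht Hlt. destruct (dminus_dplus_decreasing t tau0 Ht Hlt (Rle_refl _)).
  destruct dminus_dplus_tau0. lra.
Qed.

Lemma dsq_tau0 : dsq tau0 = 0.
Proof. unfold dsq. destruct dminus_dplus_tau0 as [-> _]. ring. Qed.

Lemma dsq_pos t : in_interval tmin tmax t -> t < tau0 -> 0 < dsq t.
Proof. intros. destruct (dminus_dplus_pos t); auto. unfold dsq. nra. Qed.

Lemma dsq_decreasing t1 t2 : in_interval tmin tmax t1 -> t1 < t2 -> t2 <= tau0 -> dsq t2 < dsq t1.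
Proof.
  intros H1 H12 H2. destruct (dminus_dplus_decreasing t1 t2 H1 H12 H2).
  assert (Hi2 : in_interval tmin tmax t2)
    by (apply in_interval_between with t1 tau0; auto; [apply (pm_tau0 G) | lra]).
  assert (0 <= dminus t2 /\ 0 <= dplus t2).
  { destruct (Req_dec t2 tau0) as [-> | Hne].
    - destruct dminus_dplus_tau0. lra.
    - destruct (dminus_dplus_pos t2 Hi2 ltac:(lra)). lra. }
  unfold dsq. nra.
Qed.

Lemma continuity_pt_dsq t : in_interval tmin tmax t -> continuity_pt dsq t.
Proof.
  intro Ht. apply continuity_pt_ex_derive. unfold dsq, dminus, dplus.
  apply (ex_derive_mult (fun t => dtime t - dpos t) (fun t => dtime t + dpos t));
    [apply (ex_derive_minus dtime dpos) | apply (ex_derive_plus dtime dpos)];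
    eexists; [apply is_derive_dtime | apply is_derive_dpos | apply is_derive_dtime | apply is_derive_dpos];
    auto.
Qed.

Lemma Dist_dsq t : in_interval tmin tmax t -> Dist (vsub (y tau0) (y t)) = sqrt (dsq t).
Proof.
  intro Ht. unfold Dist. f_equal. unfold mink, vsub.
  rewrite (dpos_spatial t 1), (dpos_spatial t 2), (dpos_spatial t 3) by (auto; lia).
  pose proof (sq_n_sum (dpos t)). unfold dsq, dminus, dplus, dtime. lra.
Qed.

Lemma y_light_cone t : in_interval tmin tmax t -> forall a, (a < 4)%nat ->
  y t a = (if Nat.eqb a 0 then y tau0 0%nat else y tau0 a)
          + (if Nat.eqb a 0 then -1/2 else n a / 2) * dminus t
          + (if Nat.eqb a 0 then -1/2 else - n a / 2) * dplus t.
Proof.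
  intros Ht [| a] Ha; simpl.
  - unfold dminus, dplus, dtime. field.
  - pose proof (dpos_spatial t (S a) Ht ltac:(lia)). unfold dminus, dplus. field_simplify. lra.
Qed.

Lemma dtime_ge t : in_interval tmin tmax t -> t <= tau0 -> tau0 - t <= dtime t.
Proof.
  intros Ht Hle.
  assert (HI : forall x, t <= x <= tau0 -> in_interval tmin tmax x)
    by (intros; apply in_interval_between with t tau0; auto; apply (pm_tau0 G)).
  destruct (Req_dec t tau0) as [-> | Hne]; [unfold dtime; lra|].
  destruct (MVT_gen dtime t tau0 (fun s => - vtime s)) as [c [Hc E]];
    rewrite ?Rmin_left, ?Rmax_right in * by lra.
  - intros x Hx. apply is_derive_dtime, HI. lra.
  - intros x Hx. apply continuity_pt_ex_derive. eexists. apply is_derive_dtime, HI, Hx.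
  - pose proof (vtime_vpos_hyperbola c (HI c Hc)). pose proof (vtime_pos c (HI c Hc) (proj2 Hc)).
    assert (1 <= vtime c) by nra.
    replace (dtime tau0) with 0 in E by (unfold dtime; ring). nra.
Qed.

(* For a finite past endpoint, bounded light-cone coordinates would give [y] an endpoint. *)
Lemma light_cone_unbounded_finite_past m t1 Ka Kb : tmin = Finite m ->
  in_interval tmin tmax t1 -> t1 < tau0 ->
  ~ (forall s, m < s <= t1 -> dminus s <= Ka /\ dplus s <= Kb).
Proof.
  intros Hm Ht1 Ht1tau Hbd.
  assert (Hmt1 : m < t1) by (destruct Ht1 as [H _]; rewrite Hm in H; exact H).
  assert (HI : forall s, m < s <= t1 -> in_interval tmin tmax s)
    by (intros; apply in_interval_below with tau0; [apply (pm_tau0 G) | rewrite Hm; simpl |]; lra).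
  assert (Hmono : forall s u, m < s -> s <= u -> u <= t1 ->
            dminus u <= dminus s /\ dplus u <= dplus s).
  { intros s u Hs Hsu Hu. destruct (Req_dec s u) as [-> | Hne]; [lra|].
    destruct (dminus_dplus_decreasing s u (HI s ltac:(lra)) ltac:(lra) ltac:(lra)). lra. }
  destruct (ex_lim_at_right_nonincreasing dminus m t1 Ka Hmt1) as [LA HLA];
    [intros; eapply proj1, Hmono; auto | intros; eapply proj1, Hbd; auto |].
  destruct (ex_lim_at_right_nonincreasing dplus m t1 Kb Hmt1) as [LB HLB];
    [intros; eapply proj2, Hmono; auto | intros; eapply proj2, Hbd; auto |].
  apply (pm_inext G m Hm).
  exists (fun a => (if Nat.eqb a 0 then y tau0 0%nat else y tau0 a)
                   + (if Nat.eqb a 0 then -1/2 else n a / 2) * LA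
                   + (if Nat.eqb a 0 then -1/2 else - n a / 2) * LB).
  intros a Ha. eapply filterlim_ext_loc; [| apply filterlim_affine2; [apply at_right_proper_filter | eauto..]].
  exists (mkposreal _ (proj2 (Rlt_0_minus _ _) Hmt1)). intros s Hs Hms.
  rewrite ball_R in Hs. simpl in Hs. apply Rabs_def2 in Hs.
  symmetry. apply y_light_cone; [apply HI; lra | exact Ha].
Qed.

Lemma dsq_unbounded K : exists t, in_interval tmin tmax t /\ t < tau0 /\ K < dsq t.
Proof.
  apply NNPP. intro Hn.
  assert (Hb : forall t, in_interval tmin tmax t -> t < tau0 -> dsq t <= K)
    by (intros t Ht Hlt; apply Rnot_lt_le; intro; apply Hn; now exists t).
  destruct (in_interval_earlier _ _ _ (pm_tau0 G)) as [t1 [Ht1 Ht1tau]].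
  destruct (dminus_dplus_pos t1 Ht1 Ht1tau) as [Ha1 Hb1].
  assert (Hbd : forall t, in_interval tmin tmax t -> t <= t1 ->
            dminus t <= K / dplus t1 /\ dplus t <= K / dminus t1).
  { intros t Ht Htt.
    assert (dminus t1 <= dminus t /\ dplus t1 <= dplus t).
    { destruct (Req_dec t t1) as [-> | Hne]; [lra|].
      destruct (dminus_dplus_decreasing t t1 Ht ltac:(lra) ltac:(lra)). lra. }
    pose proof (Hb t Ht ltac:(lra)). unfold dsq in *.
    split; [apply Rmult_le_reg_r with (dplus t1) | apply Rmult_le_reg_r with (dminus t1)];
      auto; field_simplify; nra. }
  assert (Hcases : (exists m, tmin = Finite m) \/ tmin = m_infty).
  { pose proof (pm_tau0 G) as [Hlo _]. destruct tmin; simpl in Hlo; eauto; contradiction. }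
  destruct Hcases as [[m Hm] | Hm].
  - apply (light_cone_unbounded_finite_past m t1 (K / dplus t1) (K / dminus t1) Hm Ht1 Ht1tau).
    intros s Hs. apply Hbd; [| lra].
    apply in_interval_below with tau0; [apply (pm_tau0 G) | rewrite Hm; simpl |]; lra.
  - set (t := Rmin t1 (tau0 - (K / dplus t1 + K / dminus t1) / 2 - 1)).
    assert (Htt1 : t <= t1) by apply Rmin_l.
    assert (Ht : in_interval tmin tmax t)
      by (apply in_interval_below with tau0; [apply (pm_tau0 G) | rewrite Hm; exact I | lra]).
    destruct (Hbd t Ht Htt1) as [HA HB].
    pose proof (dtime_ge t Ht ltac:(lra)) as Hge.
    pose proof (Rmin_r t1 (tau0 - (K / dplus t1 + K / dminus t1) / 2 - 1)) as Hmin. fold t in Hmin.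
    unfold dminus, dplus in *. lra.
Qed.

Lemma varpi_spec z : 0 < z ->
  in_interval tmin tmax (varpi y tmin tau0 z) /\ varpi y tmin tau0 z < tau0 /\
  dsq (varpi y tmin tau0 z) = z ^ 2.
Proof.
  intro Hz. pose proof (pm_tau0 G) as Hin.
  set (P := fun tau => Rbar_lt tmin (Finite tau) /\ tau < tau0 /\ Dist (vsub (y tau0) (y tau)) = z).
  assert (Hex : exists tau, P tau).
  { destruct (dsq_unbounded (z ^ 2)) as [t2 [Ht2 [Ht2l HQ]]].
    destruct (Ranalysis5.IVT_interv (fun s => z ^ 2 - dsq s) t2 tau0) as [w [Hw Hw0]]; try lra.
    - intros a Ha. apply continuity_pt_minus; [apply continuity_pt_const; now intros ? ? |].
      apply continuity_pt_dsq, in_interval_between with t2 tau0; auto.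
    - rewrite dsq_tau0. nra.
    - assert (Hwi : in_interval tmin tmax w) by (apply in_interval_between with t2 tau0; auto).
      assert (w <> tau0) by (intros ->; rewrite dsq_tau0 in Hw0; nra).
      exists w. split; [apply Hwi | split; [lra |]].
      rewrite (Dist_dsq w Hwi). replace (dsq w) with (z ^ 2) by lra.
      apply sqrt_pow2; lra. }
  destruct (epsilon_spec (inhabits 0) P Hex) as [H1 [H2 H3]].
  change (epsilon (inhabits 0) P) with (varpi y tmin tau0 z) in *.
  assert (Hi : in_interval tmin tmax (varpi y tmin tau0 z)) by (apply in_interval_below with tau0; auto).
  split; [exact Hi | split; [exact H2 |]].
  rewrite (Dist_dsq _ Hi) in H3.
  pose proof (pow2_sqrt (dsq (varpi y tmin tau0 z)) ltac:(left; apply dsq_pos; auto)) as E.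
  rewrite H3 in E. symmetry. exact E.
Qed.

Lemma varpi_between t1 t2 z : in_interval tmin tmax t1 -> t1 <= t2 -> t2 < tau0 -> 0 < z ->
  dsq t2 <= z ^ 2 <= dsq t1 -> t1 <= varpi y tmin tau0 z <= t2.
Proof.
  intros Ht1 H12 Ht2 Hz Hq.
  destruct (varpi_spec z Hz) as [Hi [Hlt Hvq]].
  split; apply Rnot_lt_le; intro Hcmp.
  - pose proof (dsq_decreasing _ t1 Hi Hcmp ltac:(lra)). lra.
  - assert (in_interval tmin tmax t2)
      by (apply in_interval_between with t1 tau0; auto; [apply (pm_tau0 G) | lra]).
    pose proof (dsq_decreasing t2 _ ltac:(assumption) Hcmp ltac:(lra)). lra.
Qed.

(* [varpi] inverts the increasing function [t |-> - sqrt (dsq t)]. *)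
Lemma continuity_pt_varpi z0 : 0 < z0 -> continuity_pt (varpi y tmin tau0) z0.
Proof.
  intro Hz0. pose proof (pm_tau0 G) as Hin.
  destruct (varpi_spec z0 Hz0) as [Hsi [Hslt Hsq]].
  set (ts := varpi y tmin tau0 z0) in *.
  destruct (in_interval_earlier tmin tmax ts Hsi) as [t1 [Ht1 Ht1s]].
  set (t2 := (ts + tau0) / 2).
  assert (HI : forall t, t1 <= t <= t2 -> in_interval tmin tmax t)
    by (intros; apply in_interval_between with t1 tau0; auto; unfold t2 in *; lra).
  assert (Hq : forall t, t1 <= t <= t2 -> 0 < dsq t)
    by (intros; apply dsq_pos; [apply HI | unfold t2 in *]; lra).
  assert (Hsqrt : forall w, w <= 0 -> sqrt (w ^ 2) = - w)
    by (intros; rewrite <- (sqrt_pow2 (- w)) by lra; f_equal; ring).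
  set (f := fun t => - sqrt (dsq t)).
  set (g := fun w => varpi y tmin tau0 (- w)).
  assert (Hf2 : f t2 < 0) by (apply Ropp_lt_gt_0_contravar, sqrt_lt_R0, Hq; unfold t2; lra).
  assert (Hg : forall w, f t1 <= w <= f t2 -> dsq (g w) = w ^ 2 /\ t1 <= g w <= t2).
  { intros w Hw. destruct (varpi_spec (- w) ltac:(lra)) as [_ [_ Hgq]].
    replace ((- w) ^ 2) with (w ^ 2) in Hgq by ring.
    split; [exact Hgq |]. apply varpi_between; [exact Ht1 | unfold t2; lra | unfold t2; lra | lra |].
    unfold f in Hw. pose proof (sqrt_sqrt (dsq t1) ltac:(left; apply Hq; unfold t2; lra)).
    pose proof (sqrt_sqrt (dsq t2) ltac:(left; apply Hq; unfold t2; lra)).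
    pose proof (sqrt_pos (dsq t1)). pose proof (sqrt_pos (dsq t2)). split; nra. }
  assert (Hgc : continuity_pt g (- z0)).
  { apply (Ranalysis5.continuity_pt_recip_interv f g t1 t2); [unfold t2; lra | | | | |].
    - intros x x' Hx Hxx' Hx'. apply Ropp_lt_contravar, sqrt_lt_1_alt.
      split; [left; apply Hq; lra | apply dsq_decreasing; [apply HI | |]; unfold t2 in *; lra].
    - intros w Hw1 Hw2. destruct (Hg w (conj Hw1 Hw2)) as [Hgq _].
      unfold comp, id, f at 1. rewrite Hgq, Hsqrt; [ring | lra].
    - intros w Hw1 Hw2. apply Hg. lra.
    - intros a Ha. apply continuity_pt_opp.
      apply (continuity_pt_comp dsq sqrt); [apply continuity_pt_dsq, HI, Ha |].
      apply continuity_pt_sqrt. left. apply Hq, Ha.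
    - unfold f. rewrite <- (sqrt_pow2 z0), <- Hsq by lra.
      split; apply Ropp_lt_contravar, sqrt_lt_1_alt;
        (split; [left; apply Hq | apply dsq_decreasing]; auto; unfold t2; lra). }
  apply continuity_pt_ext with (fun z => g (- z)); [intro; unfold g; f_equal; ring |].
  apply (continuity_pt_comp Ropp g); [apply continuity_pt_opp, continuity_pt_id | exact Hgc].
Qed.

(* [(X/T - V/V0) / (1 - (X/T) (V/V0))]: the relativistic difference of the velocities of the
   separation and of the worldline, hence bounded by [1]. *)
Definition geom_factor t :=
  (dpos t * vtime t - vpos t * dtime t) / (dtime t * vtime t - dpos t * vpos t).

Lemma geom_factor_bounded t : in_interval tmin tmax t -> t < tau0 ->
  0 < dtime t * vtime t - dpos t * vpos t /\ Rabs (geom_factor t) <= 1.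
Proof.
  intros Ht Hlt.
  destruct (dminus_dplus_pos t Ht Hlt) as [HA HB].
  pose proof (vtime_vpos_hyperbola t Ht). pose proof (vtime_pos t Ht ltac:(lra)).
  unfold dminus, dplus in *.
  set (T := dtime t) in *; set (X := dpos t) in *; set (a := vtime t) in *; set (b := vpos t) in *.
  assert (0 < (T - X) * (a + b)) by (apply Rmult_lt_0_compat; nra).
  assert (0 < (T + X) * (a - b)) by (apply Rmult_lt_0_compat; nra).
  assert (Hden : 0 < T * a - X * b) by nra.
  split; [exact Hden |].
  unfold geom_factor. fold T X a b.
  apply Rabs_le. split;
    apply Rmult_le_reg_r with (T * a - X * b); auto; field_simplify; nra.
Qed.

Lemma continuity_pt_geom_factor t : in_interval tmin tmax t -> t < tau0 ->
  continuity_pt geom_factor t.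
Proof.
  intros Ht Hlt.
  assert (CT : continuity_pt dtime t)
    by (apply continuity_pt_ex_derive; eexists; apply is_derive_dtime, Ht).
  assert (CX : continuity_pt dpos t)
    by (apply continuity_pt_ex_derive; eexists; apply is_derive_dpos, Ht).
  assert (CV0 : continuity_pt vtime t) by (apply (pm_vel_cont G); auto).
  assert (CV1 : continuity_pt vpos t).
  { unfold vpos, sdot.
    assert (C : forall k, (k < 4)%nat -> continuity_pt (fun s => vel y s k * n k) t)
      by (intros; apply continuity_pt_mult; [apply (pm_vel_cont G) | apply continuity_pt_const; intros ? ?]; auto).
    repeat apply continuity_pt_plus; [apply (C 1%nat) | apply (C 2%nat) | apply (C 3%nat)]; lia. }
  destruct (geom_factor_bounded t Ht Hlt) as [Hden _].
  unfold geom_factor. apply continuity_pt_div; [| | lra];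
    apply continuity_pt_minus; apply continuity_pt_mult; auto.
Qed.

Lemma tanh_psi_mu z k : 0 < z -> (1 <= k <= 3)%nat ->
  tanh (psi_ y tmin tau0 z) * mu_ y tmin tau0 z k
  = dpos (varpi y tmin tau0 z) * n k / dtime (varpi y tmin tau0 z).
Proof.
  intros Hz Hk. destruct (varpi_spec z Hz) as [Hi [Hlt Hq]].
  set (t := varpi y tmin tau0 z) in *.
  destruct (dminus_dplus_pos t Hi Hlt) as [HA HB].
  rewrite <- dpos_spatial by auto.
  apply (tanh_rapidity_direction (vsub (y tau0) (y t)) z k); auto;
    unfold vsub; [unfold dminus, dplus, dtime in *; lra |].
  rewrite (dpos_spatial t 1), (dpos_spatial t 2), (dpos_spatial t 3) by (auto; lia).
  pose proof (sq_n_sum (dpos t)). unfold dsq, dminus, dplus, dtime in Hq. simpl in Hq. lra.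
Qed.

Lemma tanh_chi_nu z k : 0 < z -> (1 <= k <= 3)%nat ->
  tanh (chi_ y tmin tau0 z) * nu_ y tmin tau0 z k
  = vpos (varpi y tmin tau0 z) * n k / vtime (varpi y tmin tau0 z).
Proof.
  intros Hz Hk. destruct (varpi_spec z Hz) as [Hi [Hlt _]].
  set (t := varpi y tmin tau0 z) in *.
  rewrite <- vel_spatial by auto.
  apply (tanh_rapidity_direction_unit (vel y t) k); auto; [apply vtime_pos; auto; lra |].
  rewrite (vel_spatial t 1), (vel_spatial t 2), (vel_spatial t 3) by (auto; lia).
  pose proof (vtime_vpos_hyperbola t Hi). pose proof (sq_n_sum (vpos t)). unfold vtime in *. lra.
Qed.

Lemma integrand_eq l sigma z : (1 <= sigma <= 3)%nat -> 0 < z ->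
  integrand l y tmin tau0 sigma z = n sigma * geom_factor (varpi y tmin tau0 z) * (J2 (z / l) / z).
Proof.
  intros Hs Hz.
  destruct (varpi_spec z Hz) as [Hi [Hlt _]].
  destruct (geom_factor_bounded _ Hi Hlt) as [Hden _].
  destruct (dminus_dplus_pos _ Hi Hlt) as [HA HB].
  assert (HV : 0 < vtime (varpi y tmin tau0 z)) by (apply vtime_pos; auto; lra).
  unfold integrand, Delta_, sdot.
  replace (tanh (psi_ y tmin tau0 z) * tanh (chi_ y tmin tau0 z)
           * (mu_ y tmin tau0 z 1%nat * nu_ y tmin tau0 z 1%nat
              + mu_ y tmin tau0 z 2%nat * nu_ y tmin tau0 z 2%nat
              + mu_ y tmin tau0 z 3%nat * nu_ y tmin tau0 z 3%nat))
    with (tanh (psi_ y tmin tau0 z) * mu_ y tmin tau0 z 1%nat * (tanh (chi_ y tmin tau0 z) * nu_ y tmin tau0 z 1%nat)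
        + tanh (psi_ y tmin tau0 z) * mu_ y tmin tau0 z 2%nat * (tanh (chi_ y tmin tau0 z) * nu_ y tmin tau0 z 2%nat)
        + tanh (psi_ y tmin tau0 z) * mu_ y tmin tau0 z 3%nat * (tanh (chi_ y tmin tau0 z) * nu_ y tmin tau0 z 3%nat))
    by ring.
  rewrite !tanh_psi_mu, !tanh_chi_nu by (auto; lia).
  unfold geom_factor, dminus, dplus in *.
  set (t := varpi y tmin tau0 z) in *.
  set (X := dpos t) in *; set (T := dtime t) in *; set (a := vtime t) in *; set (b := vpos t) in *.
  transitivity (n sigma * (X * a - b * T) * (J2 (z / l) / z)
                / (T * a - X * b * (n 1%nat * n 1%nat + n 2%nat * n 2%nat + n 3%nat * n 3%nat)));
    [field | rewrite (pm_unit G); field]; repeat split; try lra.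
  rewrite (pm_unit G). lra.
Qed.

Lemma continuity_pt_abs_integrand l sigma x : 0 < l -> (1 <= sigma <= 3)%nat -> 0 < x ->
  continuity_pt (fun z => Rabs (integrand l y tmin tau0 sigma z)) x.
Proof.
  intros Hl Hs Hx. destruct (varpi_spec x Hx) as [Hi [Hlt _]].
  set (Psi := fun z => n sigma * geom_factor (varpi y tmin tau0 z) * (J2 (z / l) / z)).
  apply continuity_pt_locally_ext with (fun z => Rabs (Psi z)) (x / 2); [lra | |].
  { intros z Hz. unfold Rdist in Hz. apply Rabs_def2 in Hz. rewrite integrand_eq by (auto; lra).
    reflexivity. }
  apply (continuity_pt_comp Psi Rabs); [| apply Rcontinuity_abs].
  unfold Psi. apply continuity_pt_mult; [apply continuity_pt_mult |].
  - apply continuity_pt_const. now intros ? ?.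
  - apply (continuity_pt_comp (varpi y tmin tau0) geom_factor);
      [apply continuity_pt_varpi | apply continuity_pt_geom_factor]; auto.
  - apply continuity_pt_div; [| apply continuity_pt_id | lra].
    apply (continuity_pt_comp (fun z => z / l) J2); [| apply continuity_pt_J2].
    apply continuity_pt_div; [apply continuity_pt_id | apply continuity_pt_const; now intros ? ? | lra].
Qed.

Lemma abs_integrand_le l sigma z : (1 <= sigma <= 3)%nat -> 0 < z ->
  Rabs (integrand l y tmin tau0 sigma z) <= abs_J2_div l z.
Proof.
  intros Hs Hz. rewrite integrand_eq by auto. unfold abs_J2_div.
  destruct (varpi_spec z Hz) as [Hi [Hlt _]].
  destruct (geom_factor_bounded _ Hi Hlt) as [_ HR].
  assert (Hn1 : Rabs (n sigma) <= 1).
  { pose proof (pm_unit G). apply Rabs_le.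
    assert (n sigma * n sigma <= 1) by (destruct sigma as [| [| [| [|]]]]; try lia; nra). nra. }
  rewrite !Rabs_mult, Rabs_div, (Rabs_pos_eq z) by lra.
  pose proof (Rabs_pos (n sigma)). pose proof (Rabs_pos (geom_factor (varpi y tmin tau0 z))).
  assert (0 <= Rabs (J2 (z / l)) / z)
    by (apply Rmult_le_pos; [apply Rabs_pos | left; apply Rinv_0_lt_compat; lra]).
  rewrite <- (Rmult_1_l (Rabs (J2 (z / l)) / z)) at 2. rewrite <- (Rmult_1_l 1).
  apply Rmult_le_compat; nra.
Qed.

Lemma abs_conv_integrand l sigma : 0 < l -> (1 <= sigma <= 3)%nat ->
  abs_conv_0_infty (integrand l y tmin tau0 sigma).
Proof.
  intros Hl Hs.
  apply ex_RInt_gen_nonneg;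
    [intros; apply continuity_pt_abs_integrand; auto | intros; apply Rabs_pos |].
  destruct (RInt_abs_J2_div_bounded l Hl) as [M HM]. exists M.
  intros a b Ha Hab. eapply Rle_trans; [| apply (HM a b Ha Hab)].
  apply RInt_le; auto.
  - apply ex_RInt_continuity_pt; auto. intros. apply continuity_pt_abs_integrand; auto; lra.
  - apply ex_RInt_continuity_pt; auto. intros. apply continuity_pt_abs_J2_div; lra.
  - intros. apply abs_integrand_le; auto; lra.
Qed.

End PlanarMotion.

Definition eta_diag (i : nat) : R := if Nat.eqb i 0 then -1 else 1.

(* [eta L^T eta], the inverse of a Lorentz matrix. *)
Definition lorentz_inv (L : nat -> nat -> R) (i j : nat) : R := eta_diag i * L j i * eta_diag j.

Definition basis4 (i : nat) : V4 := fun a => if Nat.eqb a i then 1 else 0.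

Definition col_mink (L : nat -> nat -> R) (i j : nat) : R :=
  - L 0%nat i * L 0%nat j + L 1%nat i * L 1%nat j + L 2%nat i * L 2%nat j + L 3%nat i * L 3%nat j.

Lemma col_mink_basis L : (forall x y, mink (lapply L x) (lapply L y) = mink x y) ->
  forall b c, (b < 4)%nat -> (c < 4)%nat -> col_mink L b c = mink (basis4 b) (basis4 c).
Proof.
  intros HL b c Hb Hc. rewrite <- HL.
  destruct b as [| [| [| [|]]]]; try lia; destruct c as [| [| [| [|]]]]; try lia;
    unfold col_mink, mink, lapply, basis4; simpl; ring.
Qed.

Lemma lorentz_inv_lapply L : (forall x y, mink (lapply L x) (lapply L y) = mink x y) ->
  forall x b, (b < 4)%nat -> lapply (lorentz_inv L) (lapply L x) b = x b.
Proof.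
  intros HL x b Hb.
  transitivity (eta_diag b * (x 0%nat * col_mink L b 0%nat + x 1%nat * col_mink L b 1%nat
                              + x 2%nat * col_mink L b 2%nat + x 3%nat * col_mink L b 3%nat));
    [unfold lapply, lorentz_inv, col_mink;
     change (eta_diag 0%nat) with (-1); change (eta_diag 1%nat) with 1;
     change (eta_diag 2%nat) with 1; change (eta_diag 3%nat) with 1; ring |].
  rewrite !(col_mink_basis L HL) by lia.
  destruct b as [| [| [| [|]]]]; try lia; unfold mink, basis4, eta_diag; simpl; ring.
Qed.

Lemma filterlim_lapply {T} (F : (T -> Prop) -> Prop) {FF : Filter F} (M : nat -> nat -> R)
    (f : T -> V4) (p : V4) :
  (forall a, (a < 4)%nat -> filterlim (fun t => f t a) F (locally (p a))) ->
  forall b, filterlim (fun t => lapply M (f t) b) F (locally (lapply M p b)).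
Proof.
  intros H b. unfold lapply.
  repeat apply (filterlim_Rplus F); apply (filterlim_Rmult_l F), H; lia.
Qed.

Definition indep (U W : V4) : Prop :=
  forall s t, (forall a, (a < 4)%nat -> s * U a + t * W a = 0) -> s = 0 /\ t = 0.

Definition dot4 (X Y : V4) : R :=
  X 0%nat * Y 0%nat + X 1%nat * Y 1%nat + X 2%nat * Y 2%nat + X 3%nat * Y 3%nat.

Definition gram_det (U W : V4) : R := dot4 U U * dot4 W W - dot4 U W * dot4 U W.

Lemma gram_det_pos U W : indep U W -> 0 < gram_det U W.
Proof.
  intro HI. set (m := fun i j => U i * W j - U j * W i).
  assert (Lag : gram_det U W = m 0%nat 1%nat ^ 2 + m 0%nat 2%nat ^ 2 + m 0%nat 3%nat ^ 2
                               + m 1%nat 2%nat ^ 2 + m 1%nat 3%nat ^ 2 + m 2%nat 3%nat ^ 2)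
    by (unfold gram_det, dot4, m; ring).
  apply Rnot_le_lt. intro Hle. rewrite Lag in Hle.
  assert (Hsq : forall x, x ^ 2 <= 0 -> x = 0) by (intros; nra).
  pose proof (pow2_ge_0 (m 0%nat 1%nat)); pose proof (pow2_ge_0 (m 0%nat 2%nat));
  pose proof (pow2_ge_0 (m 0%nat 3%nat)); pose proof (pow2_ge_0 (m 1%nat 2%nat));
  pose proof (pow2_ge_0 (m 1%nat 3%nat)); pose proof (pow2_ge_0 (m 2%nat 3%nat)).
  assert (H01 : m 0%nat 1%nat = 0) by (apply Hsq; lra).
  assert (H02 : m 0%nat 2%nat = 0) by (apply Hsq; lra).
  assert (H03 : m 0%nat 3%nat = 0) by (apply Hsq; lra).
  assert (H12 : m 1%nat 2%nat = 0) by (apply Hsq; lra).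
  assert (H13 : m 1%nat 3%nat = 0) by (apply Hsq; lra).
  assert (H23 : m 2%nat 3%nat = 0) by (apply Hsq; lra).
  (* The six vanishing minors make [(U.U) W - (U.W) U] vanish, so [U = 0] by independence. *)
  destruct (HI (- dot4 U W) (dot4 U U)) as [_ HUU].
  { intros a Ha. unfold m in *.
    destruct a as [| [| [| [|]]]]; try lia; unfold dot4;
      [transitivity (- U 1%nat * m 0%nat 1%nat - U 2%nat * m 0%nat 2%nat - U 3%nat * m 0%nat 3%nat)
      | transitivity (U 0%nat * m 0%nat 1%nat - U 2%nat * m 1%nat 2%nat - U 3%nat * m 1%nat 3%nat)
      | transitivity (U 0%nat * m 0%nat 2%nat + U 1%nat * m 1%nat 2%nat - U 3%nat * m 2%nat 3%nat)
      | transitivity (U 0%nat * m 0%nat 3%nat + U 1%nat * m 1%nat 3%nat + U 2%nat * m 2%nat 3%nat)];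
      unfold m; try ring; rewrite ?H01, ?H02, ?H03, ?H12, ?H13, ?H23; ring. }
  unfold dot4 in HUU.
  pose proof (pow2_ge_0 (U 0%nat)); pose proof (pow2_ge_0 (U 1%nat));
  pose proof (pow2_ge_0 (U 2%nat)); pose proof (pow2_ge_0 (U 3%nat)).
  destruct (HI 1 0) as [H10 _]; [| lra].
  intros a Ha. destruct a as [| [| [| [|]]]]; try lia;
    (replace (U _) with 0 by (symmetry; apply Hsq; simpl in *; lra)); ring.
Qed.

Definition coord1 (U W z : V4) : R := (dot4 z U * dot4 W W - dot4 z W * dot4 U W) / gram_det U W.
Definition coord2 (U W z : V4) : R := (dot4 z W * dot4 U U - dot4 z U * dot4 U W) / gram_det U W.

Lemma coord_span U W (z : V4) a0 b0 : 0 < gram_det U W ->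
  (forall a, (a < 4)%nat -> z a = a0 * U a + b0 * W a) -> coord1 U W z = a0 /\ coord2 U W z = b0.
Proof.
  intros Hd Hz.
  assert (E1 : dot4 z U = a0 * dot4 U U + b0 * dot4 U W) by (unfold dot4; rewrite !Hz by lia; ring).
  assert (E2 : dot4 z W = a0 * dot4 U W + b0 * dot4 W W) by (unfold dot4; rewrite !Hz by lia; ring).
  unfold coord1, coord2. rewrite E1, E2. unfold gram_det in *. split; field; lra.
Qed.

Lemma vel_in_span (y : R -> V4) (P U W : V4) tau0 : indep U W ->
  locally tau0 (fun t => exists s s', forall a, (a < 4)%nat -> y t a = P a + s * U a + s' * W a) ->
  (forall a, (a < 4)%nat -> ex_derive (fun s => y s a) tau0) ->
  forall a, (a < 4)%nat ->
  vel y tau0 a = coord1 U W (vel y tau0) * U a + coord2 U W (vel y tau0) * W a.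
Proof.
  intros HI Hpl Hder a Ha. pose proof (gram_det_pos U W HI) as Hd.
  set (k1 := fun b => (U b * dot4 W W - W b * dot4 U W) / gram_det U W).
  set (k2 := fun b => (W b * dot4 U U - U b * dot4 U W) / gram_det U W).
  set (c := fun b => k1 b * U a + k2 b * W a).
  assert (Hloc : locally tau0 (fun s => y s a =
     (y tau0 a - (c 0%nat * y tau0 0%nat + c 1%nat * y tau0 1%nat + c 2%nat * y tau0 2%nat
                  + c 3%nat * y tau0 3%nat))
     + c 0%nat * y s 0%nat + c 1%nat * y s 1%nat + c 2%nat * y s 2%nat + c 3%nat * y s 3%nat)).
  { generalize Hpl. apply filter_imp. intros s [r [r' Hs]].
    destruct (locally_singleton _ _ Hpl) as [q [q' Hq]].
    destruct (coord_span U W (vsub (y s) (y tau0)) (r - q) (r' - q') Hd) as [E1 E2].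
    { intros b Hb. unfold vsub. rewrite Hs, Hq by auto. ring. }
    replace (y s a) with (y tau0 a + (r - q) * U a + (r' - q') * W a) by (rewrite Hs, Hq by auto; ring).
    rewrite <- E1, <- E2. unfold coord1, coord2, c, k1, k2, vsub, dot4. field. lra. }
  unfold vel at 1. erewrite Derive_ext_loc; [| exact Hloc].
  apply is_derive_unique.
  eapply (is_derive_component_comb y tau0 _ _ _ (c 0%nat) (c 1%nat) (c 2%nat) (c 3%nat)); auto.
  unfold coord1, coord2, c, k1, k2, dot4. field. lra.
Qed.

Lemma spatial_collinear (U W : V4) alpha beta :
  (forall a, (a < 4)%nat -> alpha * U a + beta * W a = if Nat.eqb a 0 then 1 else 0) ->
  exists m : V4, forall s t, exists kappa, forall k, (1 <= k <= 3)%nat -> s * U k + t * W k = kappa * m k.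
Proof.
  intro He.
  assert (He0 := He 0%nat ltac:(lia)). simpl in He0.
  destruct (Req_dec alpha 0) as [H0 | H0].
  - exists U. intros s t. exists s. intros [| k] Hk; [lia|].
    pose proof (He (S k) ltac:(lia)) as Ek. simpl in Ek. rewrite H0 in He0, Ek.
    assert (beta <> 0) by (intro Hb; rewrite Hb in He0; lra).
    assert (W (S k) = 0) by (apply Rmult_eq_reg_l with beta; auto; lra).
    rewrite H1. ring.
  - exists W. intros s t. exists (t - s * beta / alpha). intros [| k] Hk; [lia|].
    pose proof (He (S k) ltac:(lia)) as Ek. simpl in Ek.
    replace (U (S k)) with (- beta / alpha * W (S k)) by (field_simplify_eq; [lra | auto]).
    field. auto.
Qed.

Lemma unit_direction (m : V4) : exists n : V4,
  n 1%nat * n 1%nat + n 2%nat * n 2%nat + n 3%nat * n 3%nat = 1 /\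
  forall z : V4, (exists kappa, forall k, (1 <= k <= 3)%nat -> z k = kappa * m k) ->
  forall k, (1 <= k <= 3)%nat -> z k = sdot z n * n k.
Proof.
  set (N2 := m 1%nat * m 1%nat + m 2%nat * m 2%nat + m 3%nat * m 3%nat).
  assert (HN2 : 0 <= N2) by (unfold N2; nra).
  set (N := sqrt N2). pose proof (sqrt_sqrt N2 HN2) as HN. fold N in HN.
  destruct (Req_dec N 0) as [H0 | H0].
  - exists e1. split; [unfold e1; simpl; ring|].
    assert (Hm : forall k, (1 <= k <= 3)%nat -> m k = 0).
    { rewrite H0 in HN. intros k Hk.
      assert (m k * m k <= 0) by (unfold N2 in HN; destruct k as [| [| [| [|]]]]; try lia; nra). nra. }
    intros z [kappa Hz] k Hk.
    unfold sdot, e1. rewrite !Hz, !Hm by lia. simpl. ring.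
  - exists (fun a => m a / N). split; [field_simplify_eq; [unfold N2 in HN; lra | auto]|].
    intros z [kappa Hz] k Hk.
    unfold sdot. rewrite !Hz by lia. field_simplify_eq; [| auto].
    replace (N ^ 2) with N2 by (simpl; lra). unfold N2. ring.
Qed.

Lemma exists_planar_direction (y : R -> V4) tmin tmax tau0 (P U W : V4) :
  indep U W ->
  (forall t, in_interval tmin tmax t ->
     exists s s', forall a, (a < 4)%nat -> y t a = P a + s * U a + s' * W a) ->
  in_interval tmin tmax tau0 ->
  (forall a, (a < 4)%nat -> ex_derive (fun s => y s a) tau0) ->
  (forall a, (a < 4)%nat -> vel y tau0 a = if Nat.eqb a 0 then 1 else 0) ->
  exists n : V4, n 1%nat * n 1%nat + n 2%nat * n 2%nat + n 3%nat * n 3%nat = 1 /\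
    forall t s, in_interval tmin tmax t -> (1 <= s <= 3)%nat ->
      y t s = y tau0 s + sdot (vsub (y t) (y tau0)) n * n s.
Proof.
  intros HI Hpl Hin Hder Hrest.
  assert (Hspan := vel_in_span y P U W tau0 HI
                     (filter_imp _ _ Hpl (locally_in_interval _ _ _ Hin)) Hder).
  destruct (spatial_collinear U W (coord1 U W (vel y tau0)) (coord2 U W (vel y tau0))) as [m Hm].
  { intros a Ha. rewrite <- Hrest, Hspan by auto. ring. }
  destruct (unit_direction m) as [n [Hn Hdir]].
  exists n. split; [exact Hn|]. intros t s Ht Hs.
  destruct (Hpl t Ht) as [r [r' Hr]]. destruct (Hpl tau0 Hin) as [q [q' Hq]].
  enough (vsub (y t) (y tau0) s = sdot (vsub (y t) (y tau0)) n * n s) by (unfold vsub in *; lra).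
  apply Hdir; auto. destruct (Hm (r - q) (r' - q')) as [kappa Hk]. exists kappa.
  intros k Hk'. rewrite <- Hk by auto. unfold vsub. rewrite Hr, Hq by lia. ring.
Qed.

Section LorentzImage.

Variables (xi : R -> V4) (tmin tmax : Rbar) (L : nat -> nat -> R).
Hypothesis Hw : worldline xi tmin tmax.
Hypothesis HL : forall x y, mink (lapply L x) (lapply L y) = mink x y.

Let y t := lapply L (xi t).

Lemma is_derive_lorentz_image t a : in_interval tmin tmax t ->
  is_derive (fun s => y s a) t (lapply L (vel xi t) a).
Proof.
  intro Ht. destruct Hw as [_ [_ [_ [Hsm _]]]].
  apply (is_derive_component_comb xi t _ _ 0 (L a 0%nat) (L a 1%nat) (L a 2%nat) (L a 3%nat)).
  - intros b Hb. exact (Hsm b 1%nat t Hb Ht).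
  - intro s. unfold y, lapply. ring.
  - reflexivity.
Qed.

Lemma vel_lorentz_image t a : in_interval tmin tmax t -> vel y t a = lapply L (vel xi t) a.
Proof. intro Ht. apply is_derive_unique, is_derive_lorentz_image, Ht. Qed.

Lemma continuity_pt_vel_lorentz_image t a : in_interval tmin tmax t ->
  continuity_pt (fun s => vel y s a) t.
Proof.
  intro Ht. destruct Hw as [_ [_ [_ [Hsm _]]]].
  assert (Hc : forall b, (b < 4)%nat -> continuity_pt (fun s => vel xi s b) t)
    by (intros b Hb; apply continuity_pt_ex_derive; exact (Hsm b 2%nat t Hb Ht)).
  apply continuity_pt_filterlim.
  apply (continuous_ext_loc (fun s => vel y s a) (fun s => lapply L (vel xi s) a) t).
  - generalize (locally_in_interval _ _ _ Ht). apply filter_imp. intros s Hs.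
    symmetry. apply vel_lorentz_image, Hs.
  - apply continuity_pt_filterlim. unfold lapply.
    repeat apply continuity_pt_plus;
      (apply continuity_pt_mult; [apply continuity_pt_const; now intros ? ? | apply Hc; lia]).
Qed.

Lemma proper_time_lorentz_image t : in_interval tmin tmax t -> mink (vel y t) (vel y t) = -1.
Proof.
  intro Ht. destruct Hw as [_ [_ [_ [_ [Hprop _]]]]].
  rewrite <- (Hprop t Ht), <- (HL (vel xi t) (vel xi t)). unfold mink. rewrite !vel_lorentz_image by exact Ht. reflexivity.
Qed.

Lemma inextendible_lorentz_image m : tmin = Finite m ->
  ~ exists p : V4, forall a, (a < 4)%nat -> filterlim (fun s => y s a) (at_right m) (locally (p a)).
Proof.
  intros Hm [p Hp]. destruct Hw as [_ [_ [_ [_ [_ [_ [Hinm _]]]]]]].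
  apply (Hinm m Hm). exists (lapply (lorentz_inv L) p). intros b Hb.
  eapply filterlim_ext; [intro s; exact (lorentz_inv_lapply L HL (xi s) b Hb) |].
  apply (filterlim_lapply (at_right m)); auto.
Qed.

Lemma indep_lorentz_image u v : indep u v -> indep (lapply L u) (lapply L v).
Proof.
  intros Hind s t H. apply Hind. intros a Ha.
  rewrite <- (lorentz_inv_lapply L HL (fun k => s * u k + t * v k) a Ha).
  assert (Hz : forall b, (b < 4)%nat -> lapply L (fun k => s * u k + t * v k) b = 0)
    by (intros b Hb; rewrite <- (H b Hb); unfold lapply; ring).
  unfold lapply at 1. rewrite !Hz by lia. ring.
Qed.

Lemma planar_motion_lorentz_image tau0 :
  in_timelike_plane xi tmin tmax -> in_interval tmin tmax tau0 ->
  (forall a, (a < 4)%nat -> vel y tau0 a = if Nat.eqb a 0 then 1 else 0) ->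
  exists n, planar_motion y tmin tmax tau0 n.
Proof.
  intros [p [u [v [Hind [_ Hxi]]]]] Hin Hrest.
  destruct (exists_planar_direction y tmin tmax tau0 (lapply L p) (lapply L u) (lapply L v))
    as [n [Hn Hline]]; auto.
  - exact (indep_lorentz_image u v Hind).
  - intros tau Htau. destruct (Hxi tau Htau) as [s [t Hst]]. exists s, t. intros a Ha.
    unfold y, lapply. rewrite !Hst by lia. ring.
  - intros a Ha. eexists. apply is_derive_lorentz_image, Hin.
  - exists n. constructor; auto.
    + intros t a Ha Ht. eexists. apply is_derive_lorentz_image, Ht.
    + intros t a Ha Ht. apply continuity_pt_vel_lorentz_image, Ht.
    + exact proper_time_lorentz_image.
    + exact inextendible_lorentz_image.
Qed.

End LorentzImage.

Theorem proposition3 (l : R) (xi : R -> V4) (tmin tmax : Rbar) :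
  0 < l ->
  worldline xi tmin tmax ->
  in_timelike_plane xi tmin tmax ->
  forall tau0 : R, in_interval tmin tmax tau0 ->
  forall L : nat -> nat -> R, orthochronous_lorentz L ->
  (forall a, (a < 4)%nat ->
     vel (fun t => lapply L (xi t)) tau0 a = if Nat.eqb a 0 then 1 else 0) ->
  forall sigma : nat, (1 <= sigma <= 3)%nat ->
  abs_conv_0_infty
    (integrand l (fun t => lapply L (xi t)) tmin tau0 sigma).
Proof.
  intros Hl Hw Hpl tau0 Hin L [HL _] Hrest sigma Hs.
  destruct (planar_motion_lorentz_image xi tmin tmax L Hw HL tau0 Hpl Hin Hrest) as [n G].
  exact (abs_conv_integrand _ _ _ _ _ G l sigma Hl Hs).
Qed.
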